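(* Let $G$ be a connected simple graph without bridges whose edge set is identified with $[d+1]$, let $B_1,\dots,B_n$ be the bases (spanning trees) of its graphic matroid, all of cardinality $k$, and let $V=(-e_{B_1},\dots,-e_{B_n})$ in $\mathbb{T}^d$. Let $\mathbb{K}$ be a field and $I=\langle x^{\mathbf{t}(p)}: p\in\mathbb{T}^d\rangle\subseteq\mathbb{K}[x_1,\dots,x_{d+1}]$ be the coarse type ideal, where $\mathbf{t}(p)$ is the coarse type of $p$ with respect to $V$ and $x^{\mathbf{t}}=x_1^{t_1}\cdots x_{d+1}^{t_{d+1}}$. Then $I$ is generated by the monomials $$x_{i_1}^{t_{i_1}}x_{i_2}^{t_{i_2}}\cdots x_{i_{d'+1}}^{t_{i_{d'+1}}}$$ where $d'\ge 0$, $i_1,\dots,i_{d'+1}\in[d+1]$ are pairwise distinct with $[d+1]\setminus\{i_1,\dots,i_{d'}\}$ containing a basis, and $$(t_{i_1},t_{i_2},\dots,t_{i_{d'+1}})=\big(b_{\{i_1\},\emptyset}+b_{\emptyset,\{i_1,\dots,i_{d'+1}\}},\,b_{\{i_2\},\{i_1\}},\,\dots,\,b_{\{i_{d'+1}\},\{i_1,\dots,i_{d'}\}}\big).$$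
   Context: Tropical arithmetic is min-plus; $\mathbb{T}^d=\mathbb{R}^{d+1}/\mathbb{R}(1,\dots,1)$. For $B\subseteq[d+1]$, $e_B=\sum_{i\in B}e_i$. For $m\in[d+1]$ let $\bar S_m=\{\xi\in\mathbb{T}^d:\xi_m=\min_i\xi_i\}$. For $V=(v_1,\dots,v_n)$ and $x\in\mathbb{T}^d$, $\operatorname{type}_V(x)=(T_1,\dots,T_{d+1})$ with $T_m=\{l\in[n]:v_l\in x+\bar S_m\}$, and the coarse type of $x$ is $(|T_1|,\dots,|T_{d+1}|)$. For $I,J\subseteq[d+1]$, $b_{I,J}$ is the number of bases $B$ with $I\subseteq B$ and $J\cap B=\emptyset$. *)

From HB Require Import structures.
From mathcomp Require Import all_boot all_order all_algebra.
From mathcomp Require Import reals.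
From mathcomp Require Import mpoly.
Set Implicit Arguments. Unset Strict Implicit. Unset Printing Implicit Defensive.
Import Order.TTheory GRing.Theory Num.Theory.
Local Open Scope ring_scope.

(* Graph with vertex set V and edge set 'I_n (n = d+1); edge e has endpoint set ends e. *)
Section Graph.
Variables (V : finType) (n : nat) (ends : 'I_n -> {set V}).

Definition adjF (F : {set 'I_n}) : rel V :=
  fun x y => [exists e in F, (x \in ends e) && (y \in ends e)].

Definition connectedF (F : {set 'I_n}) : bool :=
  [forall x, forall y, connect (adjF F) x y].

(* spanning tree = minimally connected spanning subgraph (basis of graphic matroid) *)
Definition spanning_tree (F : {set 'I_n}) : bool :=
  connectedF F && [forall e in F, ~~ connectedF (F :\ e)].

Definition simple_graph : Prop :=
  (forall e, #|ends e| = 2%N) /\ injective ends.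

Definition connected_graph : Prop := connectedF setT.

Definition bridgeless : Prop := forall e, connectedF (setT :\ e).

Definition bIJ (I J : {set 'I_n}) : nat :=
  #|[set B : {set 'I_n} | spanning_tree B && (I \subset B) && [disjoint J & B]]|.
End Graph.

Section Types.
Variables (R : realType) (V : finType) (n : nat) (ends : 'I_n -> {set V}).

(* the point -e_B of T^d (as a representative in R^(d+1)) *)
Definition negeB (B : {set 'I_n}) (i : 'I_n) : R := - (i \in B)%:R.

(* v in x + S_m : (v - x)_m = min_i (v - x)_i *)
Definition in_sector (v x : 'I_n -> R) (m : 'I_n) : bool :=
  [forall i, v m - x m <= v i - x i].

Definition coarse_type (x : 'I_n -> R) (m : 'I_n) : nat :=
  #|[set B : {set 'I_n} | spanning_tree ends B && in_sector (negeB B) x m]|.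
End Types.

Definition gen_ideal (n : nat) (K : comNzRingType) (S : {mpoly K[n]} -> Prop)
  (p : {mpoly K[n]}) : Prop :=
  exists s : seq ({mpoly K[n]} * {mpoly K[n]}),
    and (forall q, q \in s -> S q.2) (p = \sum_(q <- s) q.1 * q.2).

Section Monomials.
Variables (K : fieldType) (R : realType) (V : finType) (n : nat)
  (ends : 'I_n -> {set V}).

Definition coarse_type_monomial (x : 'I_n -> R) : {mpoly K[n]} :=
  \prod_(m < n) 'X_m ^+ coarse_type ends x m.

(* For the sequence i_1 :: rest = [:: i_1; i_2; ...; i_{d'+1}]:
   x_{i_1}^{b_{{i_1},0} + b_{0,{i_1..i_{d'+1}}}} *
   prod_{j} x_{i_{j+2}}^{b_{{i_{j+2}},{i_1..i_{j+1}}}} *)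
Definition gen_monomial (i1 : 'I_n) (rest : seq 'I_n) : {mpoly K[n]} :=
  'X_i1 ^+ (bIJ ends [set i1] set0 + bIJ ends set0 [set x in i1 :: rest])%N *
  \prod_(j < size rest)
     'X_(nth i1 rest j) ^+ bIJ ends [set nth i1 rest j] [set x in take j.+1 (i1 :: rest)].

(* i_1, ..., i_{d'+1} pairwise distinct and [d+1] \ {i_1..i_{d'}} contains a basis *)
Definition admissible (i1 : 'I_n) (rest : seq 'I_n) : Prop :=
  and (uniq (i1 :: rest))
    (exists B : {set 'I_n}, spanning_tree ends B && [disjoint [set x in belast i1 rest] & B]).
End Monomials.

From HB Require Import structures.
From mathcomp Require Import all_boot all_order all_algebra.
From mathcomp Require Import reals.
From mathcomp Require Import mpoly.
From mathcomp Require Import lra.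
Set Implicit Arguments. Unset Strict Implicit. Unset Printing Implicit Defensive.
Import Order.TTheory GRing.Theory Num.Theory.
Local Open Scope ring_scope.

(* Both ideals are generated by monomials, so it suffices that every generator
   of either family is divisible by a generator of the other.  Given x, order
   the coordinates within 1 of the maximum x_{i_1} decreasingly and take the
   longest prefix i_1..i_{d'+1} of this list such that some spanning tree
   avoids i_1..i_{d'}: every tree counted by an exponent of the resulting
   generator then lies in the corresponding sector of x.  Conversely, the staircase point
   x_{i_j} = -(j-1)/(d'+1), x_i = -2 off the list, has coarse type bounded by
   the exponents of the generator of i_1..i_{d'+1}. *)

Lemma gen_ideal_sub (n : nat) (K : comNzRingType) (S1 S2 : {mpoly K[n]} -> Prop) :
  (forall q, S1 q -> exists c q', S2 q' /\ q = c * q') ->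
  forall p, gen_ideal S1 p -> gen_ideal S2 p.
Proof.
move=> S12 p [s [Ss ->]]; elim: s Ss => [|[a q] s IHs] Ss.
  by exists [::]; rewrite !big_nil.
have [c [q' [S2q' ->]]] := S12 q (Ss (a, q) (mem_head _ _)).
have [s' [Ss' Es']] : gen_ideal S2 (\sum_(q <- s) q.1 * q.2).
  by apply: IHs => r rs; apply: Ss; rewrite inE rs orbT.
exists ((a * c, q') :: s'); split; last by rewrite !big_cons Es' /= mulrA.
by move=> r; rewrite inE => /orP [/eqP -> // | /Ss'].
Qed.

Definition monomial_of (n : nat) (K : comNzRingType) (t : 'I_n -> nat) : {mpoly K[n]} :=
  \prod_(m < n) 'X_m ^+ t m.

Lemma monomial_of_dvd (n : nat) (K : comNzRingType) (g t : 'I_n -> nat) :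
  (forall m, g m <= t m)%N ->
  monomial_of K t = monomial_of K (fun m => t m - g m)%N * monomial_of K g.
Proof.
move=> le_gt; rewrite -big_split /=; apply: eq_bigr => m _.
by rewrite -exprD subnK ?le_gt.
Qed.

Lemma sorted_le_notin_take (T : eqType) (leT : rel T) (s : seq T) (x y : T) :
  transitive leT -> reflexive leT -> sorted leT s ->
  x \in s -> y \in s -> y \notin take (index x s) s -> leT x y.
Proof.
move=> leT_tr leT_refl s_sorted xs ys; rewrite in_take // -leqNgt => le_xy.
have := sorted_leq_nth leT_tr leT_refl x s_sorted.
by move=> /(_ (index x s) (index y s)); rewrite !inE !index_mem !nth_index //; apply.
Qed.

Lemma belast_take (T : Type) (x : T) (s : seq T) (j : nat) :
  (j <= size s)%N -> belast x (take j s) = take j (x :: s).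
Proof. by elim: s x j => [|y s IHs] x [|j] //= js; rewrite IHs. Qed.

Lemma exists_last_true (P : pred nat) (N : nat) :
  P 0%N -> exists j, [/\ (j <= N)%N, P j & (j < N)%N -> ~~ P j.+1].
Proof.
move=> P0; have exP : exists j, (j <= N)%N && P j by exists 0%N; rewrite P0.
have ubP j : (j <= N)%N && P j -> (j <= N)%N by case/andP.
have [j /andP [jN Pj] max_j] := ex_maxnP exP ubP.
exists j; split => // jN'; apply/negP => Pj1.
by have := max_j j.+1; rewrite jN' Pj1 ltnn => /(_ isT).
Qed.

Lemma exists_sorted_window (T : finType) (R : realType) (x : T -> R) (i0 : T) :
  exists im s, [/\ forall i, x i <= x im, sorted (fun i k => x k <= x i) (im :: s),
    uniq (im :: s) & forall i, (i \in im :: s) = (x im - 1 <= x i)].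
Proof.
pose leT i k := x k <= x i.
have leT_total : total leT by move=> i k; exact: le_total.
have leT_tr : transitive leT by move=> k a b /[swap]; exact: le_trans.
have := sort_sorted leT_total (enum T); have := enum_uniq T; rewrite -(sort_uniq leT).
have mem_sort_enum i : i \in sort leT (enum T) by rewrite mem_sort mem_enum.
case: (sort leT (enum T)) mem_sort_enum => [/(_ i0) // | im s0] mem_s0 uniq_s0 sorted_s0.
have x_le_top i : x i <= x im.
  move: (mem_s0 i); rewrite inE => /orP [/eqP -> // | is0].
  by have /allP := order_path_min leT_tr sorted_s0; apply.
pose near i := x im - 1 <= x i.
have near_im : near im by rewrite /near; lra.
exists im, (filter near s0); split => //.
- by have := sorted_filter leT_tr near sorted_s0; rewrite /= near_im.
- by have := filter_uniq near uniq_s0; rewrite /= near_im.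
move=> i; rewrite inE mem_filter; have := mem_s0 i; rewrite inE.
by case: eqVneq => [-> | _] //= ->; rewrite andbT.
Qed.

Section Exponents.
Variables (V : finType) (n : nat) (ends : 'I_n -> {set V}).

Definition gen_exponent (i1 : 'I_n) (rest : seq 'I_n) (m : 'I_n) : nat :=
  if m == i1 then (bIJ ends [set i1] set0 + bIJ ends set0 [set x in i1 :: rest])%N
  else if m \in rest then bIJ ends [set m] [set x in take (index m rest).+1 (i1 :: rest)]
  else 0%N.

Lemma gen_monomialE (K : fieldType) (i1 : 'I_n) (rest : seq 'I_n) :
  uniq (i1 :: rest) -> gen_monomial K ends i1 rest = monomial_of K (gen_exponent i1 rest).
Proof.
move=> /= /andP [i1_rest rest_uniq]; rewrite /gen_monomial.
pose F m : {mpoly K[n]} :=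
  'X_m ^+ bIJ ends [set m] [set x in take (index m rest).+1 (i1 :: rest)].
have -> : \prod_(j < size rest) 'X_(nth i1 rest j) ^+
     bIJ ends [set nth i1 rest j] [set x in take j.+1 (i1 :: rest)] =
   \prod_(j < size rest) F (nth i1 rest j).
  by apply: eq_bigr => j _; rewrite /F index_uniq.
rewrite -(big_mkord xpredT (F \o nth i1 rest)) -(big_nth i1 xpredT F).
rewrite (big_uniq _ rest_uniq) /= big_mkcond /=.
set e := (_ + _)%N.
have -> : 'X_i1 ^+ e = \prod_(m < n) (if m == i1 then 'X_m ^+ e else 1) :> {mpoly K[n]}.
  by rewrite -big_mkcond big_pred1_eq.
rewrite -big_split /=; apply: eq_bigr => m _; rewrite /gen_exponent /F.
case: eqP => [->|_]; first by rewrite (negbTE i1_rest) mulr1.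
by case: (m \in rest); rewrite ?mul1r ?expr0.
Qed.

Lemma exists_spanning_tree : connected_graph ends -> exists B, spanning_tree ends B.
Proof.
move=> connT; have [F connF minF] := arg_minnP (fun F : {set 'I_n} => #|F|) connT.
exists F; rewrite /spanning_tree connF; apply/forall_inP => e eF; apply/negP.
by move=> /minF; rewrite (cardsD1 e F) eF add1n ltnn.
Qed.

End Exponents.

Section Staircase.
Variables (R : realType) (V : finType) (n : nat) (ends : 'I_n -> {set V}).

Lemma in_sector_negeBP (x : 'I_n -> R) (B : {set 'I_n}) (m : 'I_n) :
  reflect (forall i, x i + (i \in B)%:R <= x m + (m \in B)%:R)
          (in_sector (negeB R B) x m).
Proof.
apply: (iffP forallP) => le_x i; have := le_x i; rewrite /negeB; lra.
Qed.

Lemma natr_bool_bounds (b : bool) : 0 <= b%:R :> R /\ b%:R <= 1 :> R.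
Proof. by rewrite ler0n lern1 leq_b1. Qed.

Definition staircase (l : seq 'I_n) (i : 'I_n) : R :=
  if i \in l then - ((index i l)%:R / (size l)%:R) else -2.

Lemma staircase_head (i1 : 'I_n) (rest : seq 'I_n) : staircase (i1 :: rest) i1 = 0.
Proof. by rewrite /staircase mem_head /= eqxx mul0r oppr0. Qed.

Lemma staircase_notin (l : seq 'I_n) (i : 'I_n) : i \notin l -> staircase l i = -2.
Proof. by rewrite /staircase => /negbTE ->. Qed.

Lemma staircase_bounds (l : seq 'I_n) (i : 'I_n) : i \in l -> -1 < staircase l i <= 0.
Proof.
move=> il; have size_gt0 : (0 < size l)%N by case: l il.
rewrite /staircase il oppr_le0 ltrNl divr_ge0 //= andbT opprK ltr_pdivrMr ?ltr0n // mul1r.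
by rewrite ltr_nat index_mem.
Qed.

Lemma staircase_lt (l : seq 'I_n) (i j : 'I_n) :
  i \in l -> j \in l -> (index i l < index j l)%N -> staircase l j < staircase l i.
Proof.
move=> il jl lt_ij; have size_gt0 : (0 < size l)%N by case: l il {jl lt_ij}.
by rewrite /staircase il jl ltrN2 ltr_pM2r ?ltr_nat // invr_gt0 ltr0n.
Qed.

Lemma coarse_type_staircase_le (i1 : 'I_n) (rest : seq 'I_n) (m : 'I_n) :
  (coarse_type ends (staircase (i1 :: rest)) m <= gen_exponent ends i1 rest m)%N.
Proof.
set l := i1 :: rest; rewrite /coarse_type /gen_exponent.
have x_i1 : staircase l i1 = 0 := staircase_head i1 rest.
have [-> | m_i1] := eqVneq m i1.
  apply: leq_trans (leq_card_setU _ _); apply/subset_leq_card/subsetP => B.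
  rewrite !inE sub1set sub0set disjoints_subset sub0set andbT.
  move=> /andP [-> /in_sector_negeBP le_x].
  case i1B : (i1 \in B) => //=; rewrite disjoints_subset; apply/subsetP => k.
  rewrite !in_set => kl; apply/negP => kB; have := le_x k; rewrite kB i1B x_i1 /=.
  have := staircase_bounds kl; lra.
case: ifP => m_rest; last first.
  rewrite leqn0 cards_eq0; apply/eqP/setP => B; rewrite !inE.
  apply/negP => /andP [_ /in_sector_negeBP /(_ i1)].
  rewrite x_i1 staircase_notin ?inE ?negb_or ?m_i1 ?m_rest //.
  have := natr_bool_bounds (i1 \in B); have := natr_bool_bounds (m \in B); lra.
have ml : m \in l by rewrite /l inE m_rest orbT.
have index_m : index m l = (index m rest).+1 by rewrite /= eq_sym (negbTE m_i1).
have x_m_lt0 : staircase l m < 0.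
  by rewrite -x_i1 staircase_lt ?mem_head // index_m /= eqxx.
apply/subset_leq_card/subsetP => B; rewrite !inE sub1set.
move=> /andP [-> /in_sector_negeBP le_x] /=.
have mB : m \in B.
  apply: contraT => /negbTE mB; have := le_x i1; rewrite mB x_i1 /=.
  have := natr_bool_bounds (i1 \in B); lra.
rewrite mB disjoints_subset; apply/subsetP => k.
rewrite !in_set -[i1 :: _]/(take (index m rest).+1 l) -index_m => k_before.
apply/negP => kB; have kl := mem_take k_before; have := le_x k; rewrite kB mB.
have := staircase_lt kl ml; rewrite -(in_take _ kl) => /(_ k_before); lra.
Qed.

End Staircase.

Section Window.
Variables (R : realType) (V : finType) (n : nat) (ends : 'I_n -> {set V}).
Variables (x : 'I_n -> R) (im : 'I_n) (s : seq 'I_n) (j : nat).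
Hypothesis x_le_top : forall i, x i <= x im.
Hypothesis window_sorted : sorted (fun i k => x k <= x i) (im :: s).
Hypothesis mem_window : forall i, (i \in im :: s) = (x im - 1 <= x i).
Hypothesis far_from_trees : forall B, spanning_tree ends B ->
  [disjoint [set y in im :: take j s] & B] -> forall i, i \in B -> x i < x im - 1.

Lemma gen_exponent_top_le :
  (gen_exponent ends im (take j s) im <= coarse_type ends x im)%N.
Proof.
rewrite /gen_exponent eqxx /coarse_type /bIJ.
set S1 := [set B | _ && _]; set S2 := [set B | _ && _].
have im_notin_S2 B : B \in S2 -> im \notin B.
  by rewrite inE => /andP [_ avoid]; rewrite (disjointFr avoid) // in_set mem_head.
have /leqifP := leq_card_setU S1 S2.
have -> : [disjoint S1 & S2].
  rewrite disjoints_subset; apply/subsetP => B.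
  rewrite inE sub1set => /andP [/andP [_ imB] _].
  by rewrite in_setC; apply: contraL imB; exact: im_notin_S2.
move=> /eqP <-; apply/subset_leq_card/subsetP => B.
case/setUP => [|B_S2]; rewrite !inE.
  rewrite sub1set => /andP [/andP [-> imB] _]; apply/in_sector_negeBP => i.
  have := x_le_top i; have := natr_bool_bounds R (i \in B); rewrite imB /= mulr1n; lra.
move: B_S2 (im_notin_S2 _ B_S2); rewrite inE => /andP [/andP [tB _] avoid].
move=> /negbTE imB; rewrite tB; apply/in_sector_negeBP => i; rewrite imB.
have := x_le_top i; case iB : (i \in B) => /=; last lra.
have := far_from_trees tB avoid iB; lra.
Qed.

Lemma gen_exponent_rest_le (m : 'I_n) : m != im -> m \in take j s ->
  (gen_exponent ends im (take j s) m <= coarse_type ends x m)%N.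
Proof.
move=> m_im m_rest; rewrite /gen_exponent (negbTE m_im) m_rest /coarse_type /bIJ.
have m_near : x im - 1 <= x m by rewrite -mem_window inE (mem_take m_rest) orbT.
have prefix_m :
    take (index m (take j s)).+1 (im :: take j s) = take (index m (im :: s)) (im :: s).
  have index_m : index m (take j s) = index m s.
    by rewrite -{2}(cat_take_drop j s) index_cat m_rest.
  rewrite /= eq_sym (negbTE m_im) index_m take_takel // -index_m.
  have := index_mem m (take j s); rewrite m_rest size_take_min leq_min.
  by case/andP => /ltnW.
apply/subset_leq_card/subsetP => B; rewrite !inE sub1set.
move=> /andP [/andP [-> mB] avoid]; apply/in_sector_negeBP => i; rewrite mB /= mulr1n.
case iB : (i \in B) => /=; last by have := x_le_top i; lra.
suff : x i <= x m by lra.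
have [i_near | ] := boolP (x im - 1 <= x i); last by rewrite -ltNge; lra.
have leT_tr : transitive (fun i k => x k <= x i) by move=> k a b /[swap]; exact: le_trans.
apply: (sorted_le_notin_take leT_tr _ window_sorted) => //; rewrite ?mem_window //.
by rewrite -prefix_m -[_ \in take _ _]in_set (disjointFl avoid iB).
Qed.

End Window.

Lemma exists_admissible_gen_exponent_le (R : realType) (V : finType) (n : nat)
    (ends : 'I_n -> {set V}) (x : 'I_n -> R) (i0 : 'I_n) :
  connected_graph ends -> exists i1 rest, admissible ends i1 rest /\
    forall m, (gen_exponent ends i1 rest m <= coarse_type ends x m)%N.
Proof.
move=> connG; have [im [s [x_le_top sorted_s uniq_s mem_s]]] := exists_sorted_window x i0.
pose avoided k :=
  [exists B, spanning_tree ends B && [disjoint [set y in take k (im :: s)] & B]].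
have avoided0 : avoided 0%N.
  have [B treeB] := exists_spanning_tree connG; apply/existsP; exists B.
  by rewrite treeB disjoints_subset; apply/subsetP => k; rewrite in_set.
have [j [js avoided_j maximal_j]] := exists_last_true (size s) avoided0.
have far_from_trees B : spanning_tree ends B ->
    [disjoint [set y in im :: take j s] & B] -> forall i, i \in B -> x i < x im - 1.
  move=> treeB avoid i iB; have [lt_js | ] := ltnP j (size s).
    by case/negP: (maximal_j lt_js); apply/existsP; exists B; rewrite treeB.
  move=> /take_oversize take_s; rewrite ltNge -mem_s; apply/negP => i_s.
  by move: iB; rewrite (disjointFr avoid) // in_set take_s.
exists im, (take j s); split.
  split; first by rewrite -[im :: _]/(take j.+1 (im :: s)) take_uniq.
  by case/existsP: avoided_j => B; exists B; rewrite belast_take ?size_takel.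
move=> m; have [-> | m_im] := eqVneq m im; first exact: gen_exponent_top_le.
have [m_rest | m_rest] := boolP (m \in take j s).
  exact: gen_exponent_rest_le.
by rewrite /gen_exponent (negbTE m_im) (negbTE m_rest).
Qed.

Theorem mainTheorem2 (K : fieldType) (R : realType) (V : finType) (d : nat)
  (ends : 'I_d.+1 -> {set V}) :
  simple_graph ends -> connected_graph ends -> bridgeless ends ->
  forall p : {mpoly K[d.+1]},
    gen_ideal (fun q => exists x : 'I_d.+1 -> R, q = coarse_type_monomial K ends x) p
    <->
    gen_ideal (fun q => exists (i1 : 'I_d.+1) (rest : seq 'I_d.+1),
                 and (admissible ends i1 rest) (q = gen_monomial K ends i1 rest)) p.
Proof.
move=> _ connG _ p; split; apply: gen_ideal_sub.
- move=> _ [x ->].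
  have [i1 [rest [adm le_exp]]] := exists_admissible_gen_exponent_le x ord0 connG.
  exists (monomial_of K (fun m => coarse_type ends x m - gen_exponent ends i1 rest m)%N).
  exists (gen_monomial K ends i1 rest); split; first by exists i1, rest.
  by rewrite gen_monomialE ?adm.1 //; exact: monomial_of_dvd.
- move=> _ [i1 [rest [adm ->]]]; pose x := staircase R (i1 :: rest).
  exists (monomial_of K (fun m => gen_exponent ends i1 rest m - coarse_type ends x m)%N).
  exists (coarse_type_monomial K ends x); split; first by exists x.
  by rewrite gen_monomialE ?adm.1 //; exact: monomial_of_dvd (coarse_type_staircase_le _ _ _ _).
Qed.
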